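(* Let $\mathcal{D} \in \mathsf{PLL}_2^\infty$ be finitely expandable. If $\mathcal{D}$ is weakly progressing then any infinite branch contains the main branch of a non-wellfounded box. Moreover, $\mathcal{D}$ is progressing if and only if $\mathcal{D}$ is weakly progressing.
   Context: Formulas: $A ::= X \mid X^\perp \mid A\otimes A \mid A ⅋ A \mid {!A} \mid {?A} \mid \mathbf{1} \mid \bot \mid \forall X.A \mid \exists X.A$. $\mathsf{PLL}_2^\infty$ is the set of possibly infinite coderivations over axiom, cut, $\otimes$, $⅋$, $\mathbf{1}$, $\bot$, weakening $?\mathsf{w}$ (from $\Gamma$ infer $\Gamma,?A$), absorption $?\mathsf{b}$ (from $\Gamma,A,?A$ infer $\Gamma,?A$), $\forall$, $\exists$ (instantiating only $(!,?)$-free formulas), and conditional promotion $\mathsf{cp}$ (from left premise $\Gamma,A$ and right premise $?\Gamma,!A$ infer $?\Gamma,!A$). A coderivation is finitely expandable if every branch contains finitely many cut and $?\mathsf{b}$ rules; weakly progressing if every infinite branch contains infinitely many right premises of $\mathsf{cp}$ rules; progressing if every infinite branch contains a $!$-thread (maximal upward sequence of $!$-formula occurrences linked by the parent relation) which is infinitely often in the conclusion of a $\mathsf{cp}$ rule. A non-wellfounded box is a coderivation whose infinite rightmost branch $\{\epsilon,2,22,\dots\}$ (its main branch) consists of conclusions of $\mathsf{cp}$ rules. *)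

(* Second-order parsimonious linear logic PLL_2^oo:
   formulas (de Bruijn for second-order variables), rule instances, and
   non-wellfounded coderivations represented as labelled trees indexed by
   addresses (seq nat), with explicit formula-occurrence parent pointers. *)
From HB Require Import structures.
From mathcomp Require Import all_boot.

Set Implicit Arguments.
Unset Strict Implicit.
Unset Printing Implicit Defensive.

(* Formulas.  Var n = X (de Bruijn index n), NVar n = X^perp.           *)
Inductive formula : Type :=
| Var of nat
| NVar of nat
| Tens of formula & formula
| Par of formula & formula
| Bang of formula
| Quest of formula
| One
| Bot
| All of formula        (* forall X. A, X bound as index 0 *)
| Ex of formula.

Scheme Equality for formula.
HB.instance Definition _ := hasDecEq.Build formula (compareP formula_eq_dec).

Fixpoint dual (A : formula) : formula :=
  match A with
  | Var n => NVar n
  | NVar n => Var n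
  | Tens A B => Par (dual A) (dual B)
  | Par A B => Tens (dual A) (dual B)
  | Bang A => Quest (dual A)
  | Quest A => Bang (dual A)
  | One => Bot
  | Bot => One
  | All A => Ex (dual A)
  | Ex A => All (dual A)
  end.

Fixpoint lift (c : nat) (A : formula) : formula :=
  match A with
  | Var n => Var (if c <= n then n.+1 else n)
  | NVar n => NVar (if c <= n then n.+1 else n)
  | Tens A B => Tens (lift c A) (lift c B)
  | Par A B => Par (lift c A) (lift c B)
  | Bang A => Bang (lift c A)
  | Quest A => Quest (lift c A)
  | One => One
  | Bot => Bot
  | All A => All (lift c.+1 A)
  | Ex A => Ex (lift c.+1 A)
  end.

Fixpoint subst (c : nat) (A B : formula) : formula :=
  match A with
  | Var n => if n == c then B else Var (if c < n then n.-1 else n)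
  | NVar n => if n == c then dual B else NVar (if c < n then n.-1 else n)
  | Tens A1 A2 => Tens (subst c A1 B) (subst c A2 B)
  | Par A1 A2 => Par (subst c A1 B) (subst c A2 B)
  | Bang A1 => Bang (subst c A1 B)
  | Quest A1 => Quest (subst c A1 B)
  | One => One
  | Bot => Bot
  | All A1 => All (subst c.+1 A1 (lift 0 B))
  | Ex A1 => Ex (subst c.+1 A1 (lift 0 B))
  end.

Fixpoint bq_free (A : formula) : bool :=
  match A with
  | Tens A B | Par A B => bq_free A && bq_free B
  | Bang _ | Quest _ => false
  | All A | Ex A => bq_free A
  | _ => true
  end.

Definition isBang (A : formula) : bool := if A is Bang _ then true else false.
Definition isQuest (A : formula) : bool := if A is Quest _ then true else false.
Definition unQuest (A : formula) : formula := if A is Quest B then B else A.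

(* Rule instances.  k = index (in the conclusion sequent) of the principal
   formula; m = mask saying, for each conclusion index, whether the
   occurrence goes to the left (true) or right (false) premise.          *)
Inductive rule : Type :=
| Rax of formula
| Rcut of formula & seq bool   (* cut formula A (left), A^perp (right) *)
| Rtens of nat & seq bool
| Rpar of nat
| Rone
| Rbot of nat
| Rwk of nat
| Rabs of nat
| Rall of nat
| Rex of nat & formula    (* witness B, must be (!,?)-free *)
| Rcp of nat.             (* conditional promotion *)

(* A premise is described as a list of formula occurrences, each with its
   parent pointer: Some j = its parent is occurrence j of the conclusion,
   None = no parent (cut formulas). *)
Definition occs := seq (formula * option nat).

Definition ctxm (G : seq formula) (k : nat) (P : nat -> bool) : occs :=
  [seq (nth Bot G j, Some j) | j <- iota 0 (size G) & (j != k) && P j].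

Definition ctxp (G : seq formula) (k : nat) : occs := ctxm G k (fun _ => true).

Definition all_quest_but (G : seq formula) (k : nat) : bool :=
  all (fun j => (j == k) || isQuest (nth Bot G j)) (iota 0 (size G)).

(* canonical premises of rule r with conclusion G (None: not applicable).
   Premises are listed left to right; for cp the right premise has index 1. *)
Definition canon (r : rule) (G : seq formula) : option (seq occs) :=
  match r with
  | Rax A => if perm_eq G [:: A; dual A] then Some [::] else None
  | Rcut A m =>
      Some [:: ctxm G (size G) (fun j => nth false m j) ++ [:: (A, None)];
               ctxm G (size G) (fun j => ~~ nth false m j) ++ [:: (dual A, None)]]
  | Rtens k m =>
      if k < size G then
        if nth Bot G k is Tens A B then
          Some [:: ctxm G k (fun j => nth false m j) ++ [:: (A, Some k)];
                   ctxm G k (fun j => ~~ nth false m j) ++ [:: (B, Some k)]]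
        else None
      else None
  | Rpar k =>
      if k < size G then
        if nth Bot G k is Par A B then
          Some [:: ctxp G k ++ [:: (A, Some k); (B, Some k)]]
        else None
      else None
  | Rone => if G == [:: One] then Some [::] else None
  | Rbot k =>
      if k < size G then
        if nth Bot G k is Bot then Some [:: ctxp G k] else None
      else None
  | Rwk k =>
      if k < size G then
        if nth Bot G k is Quest A then Some [:: ctxp G k] else None
      else None
  | Rabs k =>
      if k < size G then
        if nth Bot G k is Quest A then
          Some [:: ctxp G k ++ [:: (A, Some k); (Quest A, Some k)]]
        else None
      else None
  | Rall k =>
      if k < size G then
        if nth Bot G k is All A then
          Some [:: [seq (lift 0 x.1, x.2) | x <- ctxp G k] ++ [:: (A, Some k)]]
        else None
      else None
  | Rex k B =>
      if (k < size G) && bq_free B then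
        if nth Bot G k is Ex A then
          Some [:: ctxp G k ++ [:: (subst 0 A B, Some k)]]
        else None
      else None
  | Rcp k =>
      if (k < size G) && all_quest_but G k then
        if nth Bot G k is Bang A then
          Some [:: [seq (unQuest x.1, x.2) | x <- ctxp G k] ++ [:: (A, Some k)];
                   ctxp G k ++ [:: (Bang A, Some k)]]
        else None
      else None
  end.

Definition is_cp (r : rule) : bool := if r is Rcp _ then true else false.
Definition is_cut_or_abs (r : rule) : bool :=
  match r with Rcut _ _ | Rabs _ => true | _ => false end.

(* Coderivations: a node at each address (seq nat, children 0,1,...).   *)
Record node := Node { sq : occs; rl : rule }.

Definition tree := seq nat -> node.

Definition seqt (D : tree) (p : seq nat) : seq formula := map fst (sq (D p)).

Definition arity (D : tree) (p : seq nat) : nat :=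
  if canon (rl (D p)) (seqt D p) is Some ps then size ps else 0.

Inductive valid (D : tree) : seq nat -> Prop :=
| valid_root : valid D [::]
| valid_child p i : valid D p -> i < arity D p -> valid D (rcons p i).

Definition coderivation (D : tree) : Prop :=
  forall p, valid D p ->
    exists ps, canon (rl (D p)) (seqt D p) = Some ps /\
      forall i, i < size ps -> perm_eq (sq (D (rcons p i))) (nth [::] ps i).

Definition pre (b : nat -> nat) (n : nat) : seq nat := mkseq b n.

Definition inf_branch (D : tree) (b : nat -> nat) : Prop :=
  forall n, b n < arity D (pre b n).

Definition finitely_expandable (D : tree) : Prop :=
  forall b, inf_branch D b ->
    exists N, forall n, N <= n -> ~~ is_cut_or_abs (rl (D (pre b n))).

(* right premise = child index 1 *)
Definition weakly_progressing (D : tree) : Prop :=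
  forall b, inf_branch D b ->
    forall N, exists n, N <= n /\ is_cp (rl (D (pre b n))) /\ b n = 1.

Definition occ_fm (D : tree) (q : seq nat) (j : nat) : formula :=
  (nth (Bot, None) (sq (D q)) j).1.
Definition occ_par (D : tree) (q : seq nat) (j : nat) : option nat :=
  (nth (Bot, None) (sq (D q)) j).2.

(* t is a (maximal) !-thread along branch b, starting at depth m *)
Definition bang_thread (D : tree) (b : nat -> nat) (m : nat) (t : nat -> nat) : Prop :=
  (forall n, m <= n -> t n < size (sq (D (pre b n))) /\ isBang (occ_fm D (pre b n) (t n)))
  /\ (forall n, m <= n -> occ_par D (pre b n.+1) (t n.+1) = Some (t n))
  /\ (m = 0 \/ forall j, occ_par D (pre b m) (t m) = Some j ->
                         ~~ isBang (occ_fm D (pre b m.-1) j)).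

Definition progressing (D : tree) : Prop :=
  forall b, inf_branch D b ->
    exists m t, bang_thread D b m t /\
      forall N, exists n, N <= n /\ m <= n /\ rl (D (pre b n)) = Rcp (t n).

(* the subcoderivation at address p is a non-wellfounded box: its main
   branch p, p1, p11, ... consists of conclusions of cp rules *)
Definition nwf_box (D : tree) (p : seq nat) : Prop :=
  forall k, is_cp (rl (D (p ++ nseq k 1))).

Definition contains_box_main_branch (D : tree) (b : nat -> nat) : Prop :=
  exists n, nwf_box D (pre b n) /\ forall k, n <= k -> b k = 1.

From Pilot Require Import Defs.
From mathcomp Require Import all_boot zify.
From Stdlib Require Import Classical.

Set Implicit Arguments.
Unset Strict Implicit.
Unset Printing Implicit Defensive.

(* Let the weight of a sequent be its number of modalities ! and ?.  Reading
   a coderivation upwards, a step that is neither a cut nor an absorption never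
   increases the weight, and strictly decreases it at a weakening and at the
   left premise of a cp rule; so on an infinite branch of a finitely expandable
   coderivation the weight is eventually constant.  From then on the right
   premise of a cp rule consists of ?-formulas and the principal !-formula, so
   the next rule is again a cp rule entered through its right premise: the
   branch ends in the main branch of a box, and the principal !-formulas of
   these rules form a !-thread.  Conversely, the modal size of the formula
   carried by a !-thread never increases, and it drops when the thread leaves a
   cp rule in which it is principal through the left premise; so such cp rules
   are eventually left through their right premise. *)

Lemma nonincreasing_eventually_constant (f : nat -> nat) N :
  (forall n, N <= n -> f n.+1 <= f n) ->
  exists2 M, N <= M & forall n, M <= n -> f n = f M.
Proof.
move=> f_dec.
have f_mono m n : N <= m -> m <= n -> f n <= f m.
  move=> Nm /subnK <-; elim: (n - m) => [|d IH] //.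
  by rewrite addSn; apply: leq_trans (f_dec _ _) IH; lia.
suff from_value v N' : N <= N' -> f N' = v ->
    exists2 M, N <= M & forall n, M <= n -> f n = f M.
  exact: from_value (leqnn N) erefl.
elim/ltn_ind: v N' => v IH N' NN' fN'.
case: (classic (exists2 n, N' <= n & f n < v)) => [[n N'n lt_fn_v] | no_drop].
  by apply: (IH _ lt_fn_v n) => //; apply: leq_trans N'n.
exists N' => // n N'n; apply/eqP; rewrite eqn_leq f_mono //= fN' leqNgt.
by apply/negP => lt_fn_v; apply: no_drop; exists n.
Qed.

Fixpoint modal_size (A : formula) : nat :=
  match A with
  | Var _ | NVar _ | One | Bot => 0
  | Tens A B | Par A B => modal_size A + modal_size B
  | Bang A | Quest A => (modal_size A).+1
  | All A | Ex A => modal_size A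
  end.

Lemma modal_size_dual A : modal_size (dual A) = modal_size A.
Proof. by elim: A => //= ? -> // ? ->. Qed.

Lemma modal_size_lift c A : modal_size (Defs.lift c A) = modal_size A.
Proof.
by elim: A c => //= [? IH1 ? IH2 | ? IH1 ? IH2 | ? IH | ? IH] c; rewrite ?IH1 ?IH2 ?IH.
Qed.

Lemma bq_freeE B : bq_free B = (modal_size B == 0).
Proof. by elim: B => //= [? -> ? -> | ? -> ? ->]; rewrite addn_eq0. Qed.

Lemma modal_size_subst c A B : bq_free B -> modal_size (subst c A B) = modal_size A.
Proof.
rewrite bq_freeE => /eqP.
elim: A c B => //= [n|n|? IH1 ? IH2|? IH1 ? IH2|? IH|? IH|? IH|? IH] c B B0.
- by case: eqP.
- by case: eqP; rewrite ?modal_size_dual.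
all: by rewrite ?IH1 ?IH2 ?IH ?modal_size_lift.
Qed.

Lemma modal_size_unQuest A : modal_size (unQuest A) <= modal_size A.
Proof. by case: A => //= A; apply: leqnSn. Qed.

Definition weight (s : occs) : nat := \sum_(x <- s) modal_size x.1.

Lemma weight_cat s1 s2 : weight (s1 ++ s2) = weight s1 + weight s2.
Proof. exact: big_cat. Qed.

Lemma weight_cons x s : weight (x :: s) = modal_size x.1 + weight s.
Proof. exact: big_cons. Qed.

Lemma weight_nil : weight [::] = 0.
Proof. exact: big_nil. Qed.

Lemma weight_lift s : weight [seq (Defs.lift 0 x.1, x.2) | x <- s] = weight s.
Proof. by rewrite /weight big_map; apply: eq_bigr => x _; rewrite modal_size_lift. Qed.

Lemma weight_unQuest s : weight [seq (unQuest x.1, x.2) | x <- s] <= weight s.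
Proof. by rewrite /weight big_map; apply: leq_sum => x _; apply: modal_size_unQuest. Qed.

Lemma weight_ctxm G k P : k < size G ->
  weight (ctxm G k P) + modal_size (nth Bot G k) <= \sum_(A <- G) modal_size A.
Proof.
move=> kG; rewrite /weight /ctxm big_map big_filter -[in X in _ <= X](mkseq_nth Bot G).
rewrite big_map (bigD1_seq k) ?mem_iota ?iota_uniq //= addnC leq_add2l big_mkcondr.
by apply: leq_sum => i _; case: (P i).
Qed.

Lemma mem_ctxm G k P x : x \in ctxm G k P ->
  exists j, [/\ x = (nth Bot G j, Some j), j != k, j < size G & P j].
Proof.
case/mapP => j; rewrite mem_filter mem_iota add0n.
by case/andP=> /andP[jk Pj] /andP[_ jG] ->; exists j.
Qed.

Lemma ctxm_parent G k P x j : x \in ctxm G k P -> x.2 = Some j ->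
  x.1 = nth Bot G j /\ j != k.
Proof. by case/mem_ctxm => j' [-> jk _ _] [<-]. Qed.

Definition weight_drop (r : rule) (i : nat) : nat :=
  match r with Rwk _ => 1 | Rcp _ => i == 0 | _ => 0 end.

Lemma canon_weight_le r G ps i : canon r G = Some ps -> i < size ps ->
  ~~ is_cut_or_abs r ->
  weight (nth [::] ps i) + weight_drop r i <= \sum_(A <- G) modal_size A.
Proof.
case: r => [A|A m|k m|k||k|k|k|k|k B|k] //=; rewrite /ctxp.
- by case: ifP => // _ [<-].
- case: ifP => // kG; case E: (nth Bot G k) => [||A B|||||||] //= [<-].
  have := weight_ctxm (fun j => nth false m j) kG.
  have := weight_ctxm (fun j => ~~ nth false m j) kG; rewrite E /=.
  by case: i => [|[|i]] //= *; rewrite weight_cat weight_cons weight_nil /=; lia.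
- case: ifP => // kG; case E: (nth Bot G k) => [|||A B||||||] //= [<-].
  have := weight_ctxm xpredT kG; rewrite E /=.
  by case: i => [|i] //= *; rewrite weight_cat !weight_cons weight_nil /=; lia.
- by case: ifP => // _ [<-].
- case: ifP => // kG; case E: (nth Bot G k) => [|||||||||] //= [<-].
  by have := weight_ctxm xpredT kG; case: i => [|i] //= *; lia.
- case: ifP => // kG; case E: (nth Bot G k) => [|||||A||||] //= [<-].
  by have := weight_ctxm xpredT kG; rewrite E; case: i => [|i] //= *; lia.
- case: ifP => // kG; case E: (nth Bot G k) => [||||||||A|] //= [<-].
  have := weight_ctxm xpredT kG; rewrite E /=.
  by case: i => [|i] //= *; rewrite weight_cat weight_cons weight_nil weight_lift /=; lia.
- case: ifP => // /andP[kG freeB]; case E: (nth Bot G k) => [|||||||||A] //= [<-].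
  have := weight_ctxm xpredT kG; rewrite E /=.
  case: i => [|i] //= *.
  by rewrite weight_cat weight_cons weight_nil modal_size_subst //=; lia.
- case: ifP => // /andP[kG _]; case E: (nth Bot G k) => [||||A|||||] //= [<-].
  have := weight_ctxm xpredT kG; have := weight_unQuest (ctxm G k xpredT); rewrite E /=.
  by case: i => [|[|i]] //= *; rewrite weight_cat weight_cons weight_nil /=; lia.
Qed.

Definition thread_drop (r : rule) (j i : nat) : nat :=
  if r is Rcp k then (k == j) && (i == 0) else 0.

Lemma canon_parent_le r G ps i x j : canon r G = Some ps -> i < size ps ->
  x \in nth [::] ps i -> x.2 = Some j ->
  modal_size x.1 + thread_drop r j i <= modal_size (nth Bot G j).
Proof.
case: r => [A|A m|k m|k||k|k|k|k|k B|k] /=; rewrite ?/ctxp.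
- by case: ifP => // _ [<-].
- move=> [<-]; case: i => [|[|i]] //= _; rewrite mem_cat !inE addn0.
  + by case/orP => [/ctxm_parent h /h [-> _] | /eqP -> //].
  + by case/orP => [/ctxm_parent h /h [-> _] | /eqP -> //].
- case: ifP => // kG; case E: (nth Bot G k) => [||A B|||||||] //= [<-].
  case: i => [|[|i]] //= _; rewrite mem_cat !inE.
  + case/orP => [/ctxm_parent h /h [-> _] | /eqP -> /= [<-]]; rewrite ?E /=; lia.
  + case/orP => [/ctxm_parent h /h [-> _] | /eqP -> /= [<-]]; rewrite ?E /=; lia.
- case: ifP => // kG; case E: (nth Bot G k) => [|||A B||||||] //= [<-].
  case: i => [|i] //= _; rewrite mem_cat !inE.
  case/orP => [/ctxm_parent h /h [-> _] | /orP [] /eqP -> /= [<-]]; rewrite ?E /=; lia.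
- by case: ifP => // _ [<-].
- case: ifP => // kG; case E: (nth Bot G k) => [|||||||||] //= [<-].
  by case: i => [|i] //= _ /ctxm_parent h /h [-> _]; rewrite addn0.
- case: ifP => // kG; case E: (nth Bot G k) => [|||||A||||] //= [<-].
  by case: i => [|i] //= _ /ctxm_parent h /h [-> _]; rewrite addn0.
- case: ifP => // kG; case E: (nth Bot G k) => [|||||A||||] //= [<-].
  case: i => [|i] //= _; rewrite mem_cat !inE.
  case/orP => [/ctxm_parent h /h [-> _] | /orP [] /eqP -> /= [<-]]; rewrite ?E /=; lia.
- case: ifP => // kG; case E: (nth Bot G k) => [||||||||A|] //= [<-].
  case: i => [|i] //= _; rewrite mem_cat !inE.
  case/orP => [/mapP [y /ctxm_parent h ->] /h [-> _] | /eqP -> /= [<-]];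
    rewrite ?E /= ?modal_size_lift; lia.
- case: ifP => // /andP[kG freeB]; case E: (nth Bot G k) => [|||||||||A] //= [<-].
  case: i => [|i] //= _; rewrite mem_cat !inE.
  case/orP => [/ctxm_parent h /h [-> _] | /eqP -> /= [<-]];
    rewrite ?E /= ?modal_size_subst //; lia.
- case: ifP => // /andP[kG _]; case E: (nth Bot G k) => [||||A|||||] //= [<-].
  case: i => [|[|i]] //= _; rewrite mem_cat !inE.
  + case/orP => [/mapP [y /ctxm_parent h ->] /h [-> /negbTE kj] | /eqP -> /= [<-]].
      by rewrite eq_sym kj addn0 modal_size_unQuest.
    by rewrite eqxx E addn1.
  + case/orP => [/ctxm_parent h /h [-> _] | /eqP -> /= [<-]]; rewrite ?E /=; lia.
Qed.

Lemma canon_cp k G ps : canon (Rcp k) G = Some ps -> exists A,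
  [/\ k < size G, all_quest_but G k, nth Bot G k = Bang A &
   ps = [:: [seq (unQuest x.1, x.2) | x <- ctxp G k] ++ [:: (A, Some k)];
            ctxp G k ++ [:: (Bang A, Some k)]]].
Proof.
rewrite /=; case: ifP => // /andP[kG quests].
by case E: (nth Bot G k) => [||||A|||||] //= [<-]; exists A.
Qed.

Lemma cp_right_premise k G ps x : canon (Rcp k) G = Some ps -> x \in nth [::] ps 1 ->
  (x.2 = Some k /\ isBang x.1) \/ isQuest x.1.
Proof.
case/canon_cp => A [kG quests _ ->]; rewrite mem_cat !inE.
case/orP => [/mem_ctxm [j [-> jk jG _]] | /eqP -> ]; last by left.
by right; move/allP: quests => /(_ j); rewrite mem_iota jG (negbTE jk); apply.
Qed.

Lemma quest_bang_sequent_rule r G ps :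
  (forall A, A \in G -> isQuest A || isBang A) ->
  canon r G = Some ps -> 0 < size ps -> ~~ is_cut_or_abs r ->
  (exists k, r = Rwk k) \/ is_cp r.
Proof.
move=> qbG; case: r => [A|A m|k m|k||k|k|k|k|k B|k] //=; try by [left; exists k | right].
1,4: by case: ifP => // _ [<-].
all: case: ifP => // kG; have {}kG : k < size G by [exact: kG | case/andP: kG].
all: by have := qbG _ (mem_nth Bot kG); case: (nth Bot G k).
Qed.

Lemma nth_unzip1 (s : occs) j : nth Bot (unzip1 s) j = (nth (Bot, None) s j).1.
Proof. by elim: s j => [|x s IH] [|j] //=. Qed.

Lemma isBang_occ_size D q j : isBang (occ_fm D q j) -> j < size (sq (D q)).
Proof. by rewrite /occ_fm; case: ltnP => // qj; rewrite nth_default. Qed.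

Lemma preS (b : nat -> nat) n : pre b n.+1 = rcons (pre b n) (b n).
Proof. by rewrite /pre mkseqS. Qed.

Lemma pre_cat_nseq b n d : (forall k, n <= k -> b k = 1) ->
  pre b n ++ nseq d 1 = pre b (n + d).
Proof.
move=> b1; elim: d => [|d IH]; first by rewrite cats0 addn0.
by rewrite addnS preS -IH b1 ?leq_addr // -[d.+1]addn1 nseqD catA cats1.
Qed.

Section InfiniteBranch.

Variables (D : tree) (b : nat -> nat).
Hypothesis D_coder : coderivation D.
Hypothesis b_branch : inf_branch D b.

Local Notation rule_at n := (rl (D (pre b n))).
Local Notation occs_at n := (sq (D (pre b n))).

Lemma inf_branch_valid n : valid D (pre b n).
Proof. by elim: n => [|n IH]; [apply: valid_root | rewrite preS; apply: valid_child]. Qed.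

Lemma inf_branch_step n : exists2 ps,
  canon (rule_at n) (seqt D (pre b n)) = Some ps &
  b n < size ps /\ perm_eq (occs_at n.+1) (nth [::] ps (b n)).
Proof.
have [ps [canon_ps prem_ps]] := D_coder (inf_branch_valid n).
have := b_branch n; rewrite /arity canon_ps => bn.
by exists ps => //; split=> //; rewrite preS; apply: prem_ps.
Qed.

Lemma weight_step n : ~~ is_cut_or_abs (rule_at n) ->
  weight (occs_at n.+1) + weight_drop (rule_at n) (b n) <= weight (occs_at n).
Proof.
have [ps canon_ps [bn perm_ps]] := inf_branch_step n.
rewrite {1}/weight (perm_big _ perm_ps) -/(weight _) {2}/weight -(big_map fst xpredT).
exact: canon_weight_le.
Qed.

Lemma occ_size_step n j j' : j' < size (occs_at n.+1) ->
  occ_par D (pre b n.+1) j' = Some j ->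
  modal_size (occ_fm D (pre b n.+1) j') + thread_drop (rule_at n) j (b n)
    <= modal_size (occ_fm D (pre b n) j).
Proof.
move=> j'n par_j'; have [ps canon_ps [bn perm_ps]] := inf_branch_step n.
have := canon_parent_le canon_ps bn _ par_j'.
by rewrite -(perm_mem perm_ps) mem_nth // nth_unzip1; apply.
Qed.

Lemma cp_direction n : is_cp (rule_at n) -> b n <= 1.
Proof.
have [ps + [bn _]] := inf_branch_step n.
by case: (rule_at n) => // k /canon_cp [A [_ _ _ ps_def]] _; rewrite ps_def in bn.
Qed.

Lemma cp_principal_bang n j : rule_at n = Rcp j -> isBang (occ_fm D (pre b n) j).
Proof.
have [ps + _] := inf_branch_step n; move=> /[swap] -> /canon_cp [A [_ _ bang_j _]].
by rewrite /occ_fm -nth_unzip1 bang_j.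
Qed.

Lemma cp_right_occ n j x : rule_at n = Rcp j -> b n = 1 -> x \in occs_at n.+1 ->
  (x.2 = Some j /\ isBang x.1) \/ isQuest x.1.
Proof.
have [ps + [_ perm_ps]] := inf_branch_step n; move=> /[swap] -> canon_ps bn1.
by rewrite (perm_mem perm_ps) bn1; apply: cp_right_premise canon_ps.
Qed.

Lemma eventually_no_weight_drop : finitely_expandable D ->
  exists M, forall n, M <= n ->
    ~~ is_cut_or_abs (rule_at n) /\ weight_drop (rule_at n) (b n) = 0.
Proof.
move=> D_fe; have [N no_cut] := D_fe b b_branch.
have [M NM weight_const] := @nonincreasing_eventually_constant
  (fun n => weight (occs_at n)) N
  (fun n Nn => leq_trans (leq_addr _ _) (weight_step (no_cut n Nn))).
exists M => n Mn; have no_cut_n := no_cut n (leq_trans NM Mn).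
split=> //; have := weight_step no_cut_n.
by rewrite weight_const ?(leqW Mn) // -(weight_const n Mn); lia.
Qed.

Lemma no_weight_drop_cp_right n : weight_drop (rule_at n) (b n) = 0 ->
  is_cp (rule_at n) -> b n = 1.
Proof.
move=> no_drop cp_n; have := cp_direction cp_n.
by move: no_drop; case: (rule_at n) cp_n => //= _ _; case: (b n) => [|[|]].
Qed.

Lemma no_weight_drop_cp_succ n :
  weight_drop (rule_at n) (b n) = 0 -> ~~ is_cut_or_abs (rule_at n.+1) ->
  weight_drop (rule_at n.+1) (b n.+1) = 0 ->
  is_cp (rule_at n) -> is_cp (rule_at n.+1).
Proof.
move=> no_drop no_cut no_drop' cp_n; have bn1 := no_weight_drop_cp_right no_drop cp_n.
move: cp_n; case E: (rule_at n) => [||||||||||j] // _.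
have quest_bang A : A \in seqt D (pre b n.+1) -> isQuest A || isBang A.
  case/mapP => x x_in ->.
  by case: (cp_right_occ E bn1 x_in) => [[_ ->] | ->]; rewrite ?orbT.
have [ps canon_ps [bn _]] := inf_branch_step n.+1.
have [[k wk] | //] := quest_bang_sequent_rule quest_bang canon_ps
  (leq_ltn_trans (leq0n _) bn) no_cut.
by rewrite wk in no_drop'.
Qed.

Lemma eventually_cp_right : finitely_expandable D -> weakly_progressing D ->
  exists n0, forall k, n0 <= k -> is_cp (rule_at k) /\ b k = 1.
Proof.
move=> D_fe D_wp; have [M no_drop] := eventually_no_weight_drop D_fe.
have [n0 [Mn0 [cp_n0 _]]] := D_wp b b_branch M.
have cp_from_n0 k : n0 <= k -> is_cp (rule_at k).
  move/subnK <-; elim: (k - n0) => [|d IH] //; rewrite addSn.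
  have [_ drop_d] := no_drop (d + n0) (leq_trans Mn0 (leq_addl _ _)).
  have [no_cut drop_d'] := no_drop (d + n0).+1 (leq_trans Mn0 (leqW (leq_addl _ _))).
  exact: no_weight_drop_cp_succ drop_d no_cut drop_d' IH.
exists n0 => k n0k; have cp_k := cp_from_n0 k n0k; split=> //.
by apply: no_weight_drop_cp_right cp_k; case: (no_drop k (leq_trans Mn0 n0k)).
Qed.

Lemma weakly_progressing_box_main_branch :
  finitely_expandable D -> weakly_progressing D -> contains_box_main_branch D b.
Proof.
move=> D_fe D_wp; have [n0 cp_right] := eventually_cp_right D_fe D_wp.
have b1 k : n0 <= k -> b k = 1 by case/cp_right.
exists n0; split=> // d; rewrite pre_cat_nseq //.
by case: (cp_right (n0 + d) (leq_addr _ _)).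
Qed.

Lemma bang_thread_cp_right m t : bang_thread D b m t ->
  (forall N, exists n, N <= n /\ m <= n /\ rule_at n = Rcp (t n)) ->
  forall N, exists n, N <= n /\ is_cp (rule_at n) /\ b n = 1.
Proof.
move=> [t_bang [t_par _]] t_cp.
have [M mM size_const] := @nonincreasing_eventually_constant
  (fun n => modal_size (occ_fm D (pre b n) (t n))) m
  (fun n mn => leq_trans (leq_addr _ _)
     (occ_size_step (proj1 (t_bang n.+1 (leqW mn))) (t_par n mn))).
move=> N; have [n [Nn [mn cp_n]]] := t_cp (maxn N M).
have Mn : M <= n by apply: leq_trans Nn; apply: leq_maxr.
have cp_n' : is_cp (rule_at n) by rewrite cp_n.
exists n; split; first by apply: leq_trans Nn; apply: leq_maxl.
split=> //; have := occ_size_step (proj1 (t_bang n.+1 (leqW mn))) (t_par n mn).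
rewrite size_const ?(leqW Mn) // -(size_const n Mn) cp_n /= eqxx.
by have := cp_direction cp_n'; case: (b n) => [|[|]] //= *; lia.
Qed.

Definition bang_chain (m : nat) (t : nat -> nat) : Prop :=
  (forall n, m <= n -> isBang (occ_fm D (pre b n) (t n))) /\
  (forall n, m <= n -> occ_par D (pre b n.+1) (t n.+1) = Some (t n)).

Lemma bang_chain_thread m t : bang_chain m t ->
  (m = 0 \/ forall j, occ_par D (pre b m) (t m) = Some j ->
                      ~~ isBang (occ_fm D (pre b m.-1) j)) ->
  bang_thread D b m t.
Proof.
case=> t_bang t_par t_max; split=> [n mn | //].
by have bang_n := t_bang n mn; rewrite isBang_occ_size.
Qed.

Lemma bang_chain_maximal n0 t : bang_chain n0 t ->
  exists m t', [/\ bang_thread D b m t', m <= n0 & forall n, n0 <= n -> t' n = t n].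
Proof.
elim: n0 t => [|n IH] t t_chain.
  by exists 0, t; split=> //; apply: bang_chain_thread; last left.
case: (classic (exists2 j, occ_par D (pre b n.+1) (t n.+1) = Some j &
                           isBang (occ_fm D (pre b n) j))) => [[j par_j bang_j] | no_ext].
  pose t1 k := if k == n then j else t k.
  have t1_chain : bang_chain n t1.
    case: t_chain => t_bang t_par; split=> k nk; rewrite /t1.
      by case: eqP => [-> // | k_ne_n]; apply: t_bang; lia.
    by rewrite gtn_eqF //; case: eqP => [-> // | k_ne_n]; rewrite t_par //; lia.
  have [m [t' [t'_thread mn t'_t1]]] := IH t1 t1_chain.
  exists m, t'; split=> [//||k nk]; first exact: leqW.
  by rewrite t'_t1 1?ltnW // /t1 gtn_eqF.
exists n.+1, t; split=> //; apply: bang_chain_thread => //; right=> j par_j.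
by apply/negP => bang_j; apply: no_ext; exists j.
Qed.

Lemma cp_right_progressing n0 :
  (forall k, n0 <= k -> is_cp (rule_at k) /\ b k = 1) ->
  exists m t, bang_thread D b m t /\
    forall N, exists n, N <= n /\ m <= n /\ rule_at n = Rcp (t n).
Proof.
move=> cp_right; pose t k := if rule_at k is Rcp j then j else 0.
have rule_t k : n0 <= k -> rule_at k = Rcp (t k).
  by case/cp_right; rewrite /t; case: (rule_at k).
have t_chain : bang_chain n0 t.
  split=> k n0k; first exact/cp_principal_bang/rule_t.
  have bang_k1 := cp_principal_bang (rule_t _ (leqW n0k)).
  have [_ bk1] := cp_right k n0k.
  have := cp_right_occ (rule_t _ n0k) bk1 (mem_nth (Bot, None) (isBang_occ_size bang_k1)).
  by case=> [[] // | quest]; move: bang_k1 quest; rewrite /occ_fm; case: (_.1).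
have [m [t' [t'_thread mn0 t'_t]]] := bang_chain_maximal t_chain.
exists m, t'; split=> // N; exists (maxn N n0); rewrite leq_maxl t'_t ?leq_maxr //.
by split=> //; split; [apply: leq_trans mn0 _; apply: leq_maxr | apply/rule_t/leq_maxr].
Qed.

End InfiniteBranch.

Lemma progressing_weakly_progressing D : coderivation D ->
  progressing D -> weakly_progressing D.
Proof.
move=> D_coder D_prog b b_branch.
have [m [t [t_thread t_cp]]] := D_prog b b_branch.
exact: bang_thread_cp_right t_thread t_cp.
Qed.

Lemma weakly_progressing_progressing D : coderivation D -> finitely_expandable D ->
  weakly_progressing D -> progressing D.
Proof.
move=> D_coder D_fe D_wp b b_branch.
have [n0 cp_right] := eventually_cp_right D_coder b_branch D_fe D_wp.
exact: cp_right_progressing cp_right.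
Qed.

Unset Implicit Arguments.

Theorem mainTheorem7 (D : tree) :
  coderivation D -> finitely_expandable D ->
  (weakly_progressing D -> forall b, inf_branch D b -> contains_box_main_branch D b)
  /\ (progressing D <-> weakly_progressing D).
Proof.
move=> D_coder D_fe; split.
  by move=> D_wp b b_branch; apply: weakly_progressing_box_main_branch.
split; first exact: progressing_weakly_progressing.
exact: weakly_progressing_progressing.
Qed.
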